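(* Let $\mathcal{H}$ be an infinite dimensional complex Hilbert space and let $\phi:\mathcal{B}(\mathcal{H})\to\mathcal{B}(\mathcal{H})$ be a bijective map preserving the Douglas solution in both directions. If $P\in\mathcal{B}(\mathcal{H})$ is an orthogonal projection ($P=P^2=P^*$), then $\phi(P)$ is an orthogonal projection.
   Context: $\mathcal{B}(\mathcal{H})$ denotes the algebra of all bounded linear operators on $\mathcal{H}$. For $A,B\in\mathcal{B}(\mathcal{H})$ with $\operatorname{ran}A\subseteq\operatorname{ran}B$, the Douglas solution of $A=BX$ is the unique $D\in\mathcal{B}(\mathcal{H})$ with $BD=A$ and $\operatorname{ran}D\subseteq(\ker B)^\perp$. A map $\phi:\mathcal{B}(\mathcal{H})\to\mathcal{B}(\mathcal{H})$ preserves the Douglas solution in both directions if for all $A,B,X\in\mathcal{B}(\mathcal{H})$: $X$ is the Douglas solution of $A=BX$ if and only if $\phi(X)$ is the Douglas solution of $\phi(A)=\phi(B)Y$. *)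

From HB Require Import structures.
From mathcomp Require Import all_boot all_order all_algebra.
From mathcomp Require Import reals complex.
Set Implicit Arguments. Unset Strict Implicit. Unset Printing Implicit Defensive.
Import Order.TTheory GRing.Theory Num.Theory.
Local Open Scope ring_scope.

Section Hilbert.
Variables (R : realType) (V : lmodType R[i]) (ip : V -> V -> R[i]).

Definition is_inner_product : Prop :=
  [/\ (forall (a : R[i]) (x y z : V), ip (a *: x + y) z = a * ip x z + ip y z),
      (forall x y : V, ip x y = Num.conj (ip y x)),
      (forall x : V, 0 <= ip x x) &
      (forall x : V, ip x x = 0 -> x = 0)].

Definition hnorm (x : V) : R := Num.sqrt (complex.Re (ip x x)).

Definition is_complete : Prop :=
  forall u : nat -> V,
    (forall e : R, 0 < e -> exists N : nat, forall m n : nat,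
        (N <= m)%N -> (N <= n)%N -> hnorm (u m - u n) < e) ->
    exists l : V, forall e : R, 0 < e -> exists N : nat, forall n : nat,
        (N <= n)%N -> hnorm (u n - l) < e.

Definition is_hilbert_space : Prop := is_inner_product /\ is_complete.

Definition infinite_dimensional : Prop :=
  forall n : nat, exists v : 'I_n -> V,
    forall c : 'I_n -> R[i], \sum_(k < n) c k *: v k = 0 -> forall k, c k = 0.

Record BH := MkBH {
  bop :> V -> V;
  bop_linear : forall (a : R[i]) (x y : V), bop (a *: x + y) = a *: bop x + bop y;
  bop_bounded : exists M : R, forall x : V, hnorm (bop x) <= M * hnorm x
}.

(* D is the Douglas solution of A = B X:  B D = A and ran D ⊆ (ker B)^⊥ *)
Definition douglas_solution (A B D : BH) : Prop :=
  (forall x : V, B (D x) = A x) /\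
  (forall x k : V, B k = 0 -> ip (D x) k = 0).

Definition preserves_douglas_both (phi : BH -> BH) : Prop :=
  forall A B X : BH,
    douglas_solution A B X <-> douglas_solution (phi A) (phi B) (phi X).

(* orthogonal projection: P = P^2 = P^*  (P^* = P unfolded via the defining
   identity of the adjoint <P x, y> = <x, P^* y>) *)
Definition orth_projection (P : BH) : Prop :=
  (forall x : V, P (P x) = P x) /\ (forall x y : V, ip (P x) y = ip x (P y)).

End Hilbert.

From mathcomp Require Import all_boot all_order all_algebra.
From mathcomp Require Import reals complex.
Import Order.TTheory GRing.Theory Num.Theory.
Local Open Scope ring_scope.

(* Orthogonal projections are characterised by the Douglas solution:
   P is an orthogonal projection if and only if P is the Douglas solution of
   the equation P = P X.  Indeed, P (P x) = P x says exactly P P = P, and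
   "ran P ⊆ (ker P)^⊥" is equivalent to self-adjointness of an idempotent:
   every x splits as P x + (x - P x) with x - P x in ker P, so both
   <P x, y> and <x, P y> reduce to <P x, P y>, and conversely for k in ker P,
   <P x, k> = <x, P k> = 0.
   Since phi preserves Douglas solutions in both directions, the triple
   (P, P, P) is mapped to the triple (phi P, phi P, phi P), and the
   characterisation transfers the property from P to phi P. *)

Section InnerProductFacts.
Variables (R : realType) (V : lmodType R[i]) (ip : V -> V -> R[i]).
Hypothesis hip : is_inner_product ip.

Lemma ip0l (z : V) : ip 0 z = 0.
Proof.
case: hip => ipL _ _ _.
have := ipL 1 0 0 z; rewrite scaler0 addr0 mul1r.
by move/(congr1 (fun t => t - ip 0 z)); rewrite subrr addrK.
Qed.

Lemma ip0r (z : V) : ip z 0 = 0.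
Proof. by case: hip => _ ipC _ _; rewrite ipC ip0l rmorph0. Qed.

Lemma ipDr (z x y : V) : ip z (x + y) = ip z x + ip z y.
Proof.
case: hip => ipL ipC _ _.
by rewrite ipC -{1}[x]scale1r ipL mul1r rmorphD /= -!ipC.
Qed.

End InnerProductFacts.

Lemma bopB {R : realType} {V : lmodType R[i]} {ip : V -> V -> R[i]}
  (Q : BH ip) (x y : V) : Q (y - x) = Q y - Q x.
Proof. by rewrite addrC -scaleN1r bop_linear scaleN1r addrC. Qed.

Lemma douglas_self_orth_projection {R : realType} {V : lmodType R[i]}
  {ip : V -> V -> R[i]} (hip : is_inner_product ip) (Q : BH ip) :
  douglas_solution Q Q Q <-> orth_projection Q.
Proof.
have ipC : forall u v, ip u v = Num.conj (ip v u) by case: hip.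
split.
- move=> [idemQ ranQ_kerQ]; split => // x y.
  (* x - Q x lies in ker Q, hence is orthogonal to ran Q *)
  have kerQ u : Q (u - Q u) = 0 by rewrite bopB idemQ subrr.
  have left_reduce : ip (Q x) y = ip (Q x) (Q y).
    by rewrite -{1}(subrK (Q y) y) addrC ipDr // (ranQ_kerQ _ _ (kerQ y)) addr0.
  have right_reduce : ip x (Q y) = ip (Q x) (Q y).
    rewrite -{1}(subrK (Q x) x) addrC ipC ipDr // (ranQ_kerQ _ _ (kerQ x)) addr0.
    by rewrite -ipC.
  by rewrite left_reduce right_reduce.
- move=> [idemQ selfadjQ]; split => // x k Qk0.
  by rewrite selfadjQ Qk0 ip0r.
Qed.

Theorem claim3 (R : realType) (V : lmodType R[i]) (ip : V -> V -> R[i])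
  (hH : is_hilbert_space ip) (hinf : infinite_dimensional V)
  (phi : BH ip -> BH ip) (hbij : bijective phi)
  (hphi : preserves_douglas_both phi)
  (P : BH ip) (hP : orth_projection P) :
  orth_projection (phi P).
Proof.
have [hip _] := hH.
have douglasP : douglas_solution P P P.
  exact: (proj2 (douglas_self_orth_projection hip P) hP).
have douglas_phiP : douglas_solution (phi P) (phi P) (phi P).
  exact: (proj1 (hphi P P P) douglasP).
exact: (proj1 (douglas_self_orth_projection hip (phi P)) douglas_phiP).
Qed.
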